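(* Let $d\in\mathbb{N}$, $k\in\{1,\dots,d\}$ and $\mathbf{e}_1\in\mathbb{R}^d$. Assume there exists $\delta>0$ such that (a) $\big||e_{1i}|-|e_{1j}|\big|\ge\sqrt2\,\delta$ for all $i\neq j$ in $\mathrm{TopFeatures}(\mathbf{e}_1;\min(k+1,d))$, and (b) if $k=d$, additionally $|e_{1i}|\ge\delta$ for all $i\in[d]$. Then for every $\mathbf{e}_2\in\mathbb{R}^d$, $$1-\mathrm{SignedRankAgree}(\mathbf{e}_1,\mathbf{e}_2;k)\le\delta^{-1}\,\|\mathbf{e}_1-\mathbf{e}_2\|_2 .$$
   Context: $\|\cdot\|_2$ is the Euclidean norm. $\mathrm{sign}(x):=1$ if $x\ge0$ and $-1$ otherwise. For $\mathbf{x}\in\mathbb{R}^d$, $\mathrm{rank}(\mathbf{x},i)$ denotes the position of index $i$ when indices are ordered by descending $|x_i|$, i.e. $|\{j\in[d]:|x_j|\ge|x_i|\}|$, with ties broken so that ranks form a permutation of $[d]$ (paper's convention: if $|x_i|=|x_j|$ with $i>j$ then $\mathrm{rank}(\mathbf{x},j)=\mathrm{rank}(\mathbf{x},i)+1$). $\mathrm{TopFeatures}(\mathbf{x};m):=\{i\in[d]:\mathrm{rank}(\mathbf{x},i)\le m\}$. The top-$k$ signed rank agreement is $\mathrm{SignedRankAgree}(\mathbf{e}_1,\mathbf{e}_2;k):=\frac1k\big|\{i\in[d]: i\in\mathrm{TopFeatures}(\mathbf{e}_1;k)\wedge i\in\mathrm{TopFeatures}(\mathbf{e}_2;k)\wedge\mathrm{sign}(e_{1i})=\mathrm{sign}(e_{2i})\wedge\mathrm{rank}(\mathbf{e}_1,i)=\mathrm{rank}(\mathbf{e}_2,i)\}\big|$.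 *)

From mathcomp Require Import all_boot all_order all_algebra.
Set Implicit Arguments. Unset Strict Implicit. Unset Printing Implicit Defensive.
Import Order.TTheory GRing.Theory Num.Theory.
Local Open Scope ring_scope.

Section Defs.
Variables (R : rcfType) (d : nat).

Definition sgn (x : R) : R := if 0 <= x then 1 else -1.

Definition norm2 (x : 'I_d -> R) : R := Num.sqrt (\sum_(i < d) (x i) ^+ 2).

(* rank(x,i): position of i when ordered by descending |x_i|, ties broken so
   that a larger index comes first (paper: |x_i|=|x_j|, i>j => rank j = rank i + 1). *)
Definition rank (x : 'I_d -> R) (i : 'I_d) : nat :=
  #|[set j : 'I_d | (`|x i| < `|x j|) || ((`|x j| == `|x i|) && (i <= j)%N)]|.

Definition TopFeatures (x : 'I_d -> R) (m : nat) : {set 'I_d} :=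
  [set i : 'I_d | (rank x i <= m)%N].

Definition SignedRankAgree (e1 e2 : 'I_d -> R) (k : nat) : R :=
  #|[set i : 'I_d | (i \in TopFeatures e1 k) && (i \in TopFeatures e2 k)
                       && (sgn (e1 i) == sgn (e2 i)) && (rank e1 i == rank e2 i)]|%:R
  / k%:R.

End Defs.

From mathcomp Require Import all_boot all_order all_algebra.
From mathcomp Require Import zify lra.
Import Order.TTheory GRing.Theory Num.Theory.
Local Open Scope ring_scope.

(* If ||e1 - e2|| >= delta the bound is trivial, so let ||e1 - e2|| < delta: any two
   coordinates of e1 - e2 then have total size below sqrt 2 * delta. A top-k feature i
   of e1 is (sqrt 2 * delta)-separated in absolute value from every other coordinate
   (those outside the top k+1 are dominated by the feature of rank k+1), and
   |e1 i| >= delta. Hence no comparison with |e1 i| flips or becomes a tie in e2 and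
   the sign of e1 i survives: every top-k feature keeps its rank and sign, and the
   agreement is 1. *)

Section Rank.
Context {R : rcfType} {d : nat}.
Implicit Types (x : 'I_d -> R) (i j l : 'I_d).

Definition outranks x j i : bool :=
  (`|x i| < `|x j|) || ((`|x j| == `|x i|) && (i <= j)%N).

Lemma rankE x i : rank x i = #|[set j | outranks x j i]|.
Proof. by []. Qed.

Lemma outranks_refl x i : outranks x i i.
Proof. by rewrite /outranks eqxx leqnn orbT. Qed.

Lemma outranks_trans x i j l : outranks x l j -> outranks x j i -> outranks x l i.
Proof.
rewrite /outranks => /orP[lt_jl|/andP[/eqP eq_lj le_jl]] /orP[lt_ij|/andP[/eqP eq_ji le_ij]].
- by rewrite (lt_trans lt_ij lt_jl).
- by rewrite -eq_ji lt_jl.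
- by rewrite eq_lj lt_ij.
- by rewrite eq_lj eq_ji eqxx (leq_trans le_ij le_jl) orbT.
Qed.
Arguments outranks_trans {x i j l}.

Lemma outranks_anti x i j : outranks x j i -> outranks x i j -> i = j.
Proof.
rewrite /outranks => /orP[lt_ij|/andP[/eqP eq_ji le_ij]] /orP[lt_ji|/andP[/eqP eq_ij le_ji]].
- by move: (lt_trans lt_ij lt_ji); rewrite ltxx.
- by move: lt_ij; rewrite eq_ij ltxx.
- by move: lt_ji; rewrite eq_ji ltxx.
- by apply: val_inj; apply/eqP; rewrite eqn_leq le_ij le_ji.
Qed.
Arguments outranks_anti {x i j}.

Lemma outranks_total x i j : outranks x j i || outranks x i j.
Proof. by rewrite /outranks; case: ltgtP => //= _; rewrite leq_total. Qed.

Lemma rank_lt_outranks x i j : outranks x j i -> j != i -> (rank x j < rank x i)%N.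
Proof.
move=> j_i neq_ji; rewrite !rankE; apply: proper_card; apply/properP; split.
  by apply/subsetP => l; rewrite !inE => /outranks_trans; apply.
exists i; rewrite !inE ?outranks_refl //.
by apply: contra neq_ji => /(outranks_anti j_i) ->.
Qed.
Arguments rank_lt_outranks {x i j}.

Lemma rank_inj x : injective (rank x).
Proof.
move=> i j eq_ij; apply: contraTeq isT => neq_ij.
have neq_ji : j != i by rewrite eq_sym.
case/orP: (outranks_total x i j) => [/rank_lt_outranks/(_ neq_ji)|].
  by rewrite eq_ij ltnn.
by move/rank_lt_outranks/(_ neq_ij); rewrite eq_ij ltnn.
Qed.

Lemma rank_gt0 x i : (0 < rank x i)%N.
Proof. by rewrite rankE; apply/card_gt0P; exists i; rewrite inE outranks_refl. Qed.

Lemma rank_le x i : (rank x i <= d)%N.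
Proof. by rewrite rankE (leq_trans (max_card _)) ?card_ord. Qed.

Lemma rank_lt_norm_ge x i j : (rank x i < rank x j)%N -> `|x j| <= `|x i|.
Proof.
move=> lt_ij; rewrite leNgt; apply: contraL lt_ij => lt_norm.
have [->|neq_ji] := eqVneq j i; first by rewrite ltnn.
by rewrite -leqNgt ltnW // rank_lt_outranks // /outranks lt_norm.
Qed.

Lemma rank_pred_lt x i : ((rank x i).-1 < d)%N.
Proof. by have := rank_gt0 x i; have := rank_le x i; lia. Qed.

Definition rank_ord x i : 'I_d := Ordinal (rank_pred_lt x i).

Lemma rank_ord_bij x : bijective (rank_ord x).
Proof.
apply: injF_bij => i j /(congr1 val) /= eq_ij; apply: (@rank_inj x).
by have := rank_gt0 x i; have := rank_gt0 x j; lia.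
Qed.

Lemma rank_onto x r : (0 < r <= d)%N -> exists i, rank x i = r.
Proof.
move=> r_bd; have r_lt : (r.-1 < d)%N by lia.
have [g _ g_rank] := rank_ord_bij x.
exists (g (Ordinal r_lt)); have := congr1 val (g_rank (Ordinal r_lt)) => /=.
by have := rank_gt0 x (g (Ordinal r_lt)); lia.
Qed.

Lemma card_TopFeatures x k : (k <= d)%N -> #|TopFeatures x k| = k.
Proof.
move=> k_le_d.
have -> : TopFeatures x k = rank_ord x @^-1: [set r : 'I_d | (r < k)%N].
  by apply/setP => i; rewrite !inE /=; have := rank_gt0 x i; lia.
rewrite card_preimset; last exact: bij_inj (rank_ord_bij x).
have -> : [set r : 'I_d | (r < k)%N] = widen_ord k_le_d @: [set: 'I_k].
  apply/setP => r; rewrite inE; apply/idP/imsetP => [r_lt_k|[s _ ->]].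
    by exists (Ordinal r_lt_k); rewrite ?inE //; apply: val_inj.
  exact: (ltn_ord s).
have widen_inj : injective (widen_ord k_le_d).
  by move=> a b /(congr1 val) eq_ab; apply: val_inj.
by rewrite (card_imset _ widen_inj) cardsT card_ord.
Qed.

End Rank.

Section TopSeparation.
Context {R : rcfType} {d k : nat} {x : 'I_d -> R} {s : R}.
Hypothesis top_sep : forall i j : 'I_d,
  i \in TopFeatures x (minn k.+1 d) -> j \in TopFeatures x (minn k.+1 d) -> i != j ->
  s <= `| `|x i| - `|x j| |.

Lemma top_sep_all i : (rank x i <= k)%N -> forall j, j != i -> s <= `| `|x i| - `|x j| |.
Proof.
move=> rank_i j neq_ji.
have i_top : i \in TopFeatures x (minn k.+1 d) by rewrite inE; have := rank_le x i; lia.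
have [j_top|j_out] := boolP (j \in TopFeatures x (minn k.+1 d)).
  by apply: top_sep; rewrite // eq_sym.
have {j_out} rank_j : (minn k.+1 d < rank x j)%N by move: j_out; rewrite inE -ltnNge.
have [m rank_m] : exists m, rank x m = k.+1.
  by apply: rank_onto; have := rank_le x j; lia.
have m_top : m \in TopFeatures x (minn k.+1 d) by rewrite inE rank_m; have := rank_le x j; lia.
have neq_im : i != m by apply: contraTneq rank_i => ->; rewrite rank_m ltnn.
have le_mi : `|x m| <= `|x i| by apply: rank_lt_norm_ge; rewrite rank_m ltnS.
have le_jm : `|x j| <= `|x m|.
  by apply: rank_lt_norm_ge; rewrite rank_m; have := rank_le x j; lia.
have := top_sep _ _ i_top m_top neq_im.
have := ler_norm (`|x i| - `|x j|).
by rewrite [`| `|x i| - `|x m| |]ger0_norm ?subr_ge0 //; lra.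
Qed.

Lemma top_norm_ge i : (k < d)%N -> (rank x i <= k)%N -> s <= `|x i|.
Proof.
move=> k_lt_d rank_i.
have [m rank_m] : exists m, rank x m = k.+1 by apply: rank_onto; lia.
have neq_mi : m != i by apply: contraTneq rank_i => <-; rewrite rank_m ltnn.
have le_mi : `|x m| <= `|x i| by apply: rank_lt_norm_ge; rewrite rank_m ltnS.
have := top_sep_all _ rank_i _ neq_mi; have := normr_ge0 (x m).
by rewrite [`| `|x i| - `|x m| |]ger0_norm ?subr_ge0 //; lra.
Qed.

End TopSeparation.

Lemma lt_perturb (R : realDomainType) (a b a' b' s : R) :
  s <= `|a - b| -> `|a - a'| + `|b - b'| < s ->
  [/\ (b == a) = false, (b' == a') = false & (a < b) = (a' < b')].
Proof.
move=> sep small.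
have /ler_normlP[? ?] := lexx `|a - a'|; have /ler_normlP[? ?] := lexx `|b - b'|.
case: (ltgtP a b) sep => [lt_ab|lt_ba|<-] sep.
- have lt_ab' : a' < b' by rewrite distrC gtr0_norm ?subr_gt0 // in sep; lra.
  by rewrite lt_ab' !gt_eqF.
- have lt_ba' : b' < a' by rewrite gtr0_norm ?subr_gt0 // in sep; lra.
  by rewrite lt_eqF // ltNge ltW.
- by rewrite subrr normr0 in sep; have := normr_ge0 (a - a'); have := normr_ge0 (a - b'); lra.
Qed.
Arguments lt_perturb {R a b a' b' s}.

Lemma rank_perturb (R : rcfType) (d : nat) (x y : 'I_d -> R) (i : 'I_d) (s : R) :
  (forall j, j != i -> s <= `| `|x i| - `|x j| |) ->
  (forall j, j != i -> `|x i - y i| + `|x j - y j| < s) ->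
  rank y i = rank x i.
Proof.
move=> sep small; rewrite !rankE; apply: eq_card => j; rewrite !inE /outranks.
have [->|neq_ji] := eqVneq j i; first by rewrite !eqxx leqnn !orbT.
have small_norm : `| `|x i| - `|y i| | + `| `|x j| - `|y j| | < s.
  have := ler_dist_dist (x i) (y i); have := ler_dist_dist (x j) (y j).
  by have := small j neq_ji; lra.
by have [-> -> ->] := lt_perturb (sep j neq_ji) small_norm.
Qed.
Arguments rank_perturb {R d x y i s}.

Lemma sgn_perturb (R : rcfType) (a b : R) : `|a - b| < `|a| -> sgn b = sgn a.
Proof.
rewrite /sgn ltr_norml; case: (lerP 0 a) => [a_ge0|a_lt0].
- by rewrite ger0_norm // => /andP[? ?]; have -> : 0 <= b by lra.
- rewrite ltr0_norm // => /andP[? ?].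
  by have -> : (0 <= b) = false by apply/negbTE; rewrite -ltNge; lra.
Qed.

Section Norm2.
Context {R : rcfType} {d : nat}.
Implicit Types a : 'I_d -> R.

Lemma norm2_ge0 a : 0 <= norm2 a.
Proof. exact: sqrtr_ge0. Qed.

Lemma normr_le_norm2 a i : `|a i| <= norm2 a.
Proof.
rewrite /norm2 -sqrtr_sqr ler_sqrt ?sumr_ge0 // => [|l _]; last exact: sqr_ge0.
by rewrite (bigD1 i) //= lerDl sumr_ge0 // => l _; apply: sqr_ge0.
Qed.

Lemma normrD_le_norm2 a i j : i != j ->
  `|a i| + `|a j| <= Num.sqrt 2 * norm2 a.
Proof.
move=> neq_ij; rewrite /norm2 -sqrtrM // -[leLHS]ger0_norm ?addr_ge0 // -[leLHS]sqrtr_sqr.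
rewrite ler_sqrt ?mulr_ge0 ?sumr_ge0 // => [|l _]; last exact: sqr_ge0.
have : `|a i| ^+ 2 + `|a j| ^+ 2 <= \sum_l a l ^+ 2.
  rewrite !real_normK ?num_real // (bigD1 i) //= (bigD1 j) 1?eq_sym //= addrA lerDl.
  by rewrite sumr_ge0 // => l _; apply: sqr_ge0.
by have := sqr_ge0 (`|a i| - `|a j|); nra.
Qed.

End Norm2.

Lemma SignedRankAgree_eq1 (R : rcfType) (d k : nat) (e1 e2 : 'I_d -> R) :
  (0 < k <= d)%N ->
  (forall i, i \in TopFeatures e1 k -> sgn (e2 i) = sgn (e1 i) /\ rank e2 i = rank e1 i) ->
  SignedRankAgree e1 e2 k = 1.
Proof.
move=> /andP[k_gt0 k_le_d] agree; rewrite /SignedRankAgree; set S := [set _ | _].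
suff -> : S = TopFeatures e1 k by rewrite card_TopFeatures // divff // pnatr_eq0 -lt0n.
apply/setP => i; rewrite inE; apply/idP/idP => [/andP[/andP[/andP[]]] //|i_top].
have [sgn_i rank_i] := agree i i_top.
by move: i_top; rewrite !inE sgn_i rank_i !eqxx => ->.
Qed.

Theorem lemma5 (R : rcfType) (d k : nat) (e1 : 'I_d -> R) (delta : R) :
  (1 <= k <= d)%N ->
  0 < delta ->
  (forall i j : 'I_d, i \in TopFeatures e1 (minn k.+1 d) ->
     j \in TopFeatures e1 (minn k.+1 d) -> i != j ->
     Num.sqrt 2 * delta <= `| `|e1 i| - `|e1 j| |) ->
  (k = d -> forall i : 'I_d, delta <= `|e1 i|) ->
  forall e2 : 'I_d -> R,
    1 - SignedRankAgree e1 e2 k <= delta^-1 * norm2 (fun i => e1 i - e2 i).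
Proof.
move=> k_bd delta_gt0 top_sep top_norm e2.
set eps := norm2 _.
have sqrt2_ge1 : 1 <= Num.sqrt (2 : R) by rewrite -[leLHS]sqrtr1 ler_sqrt // ler1n.
have [delta_le_eps|eps_lt_delta] := lerP delta eps.
  have : 1 <= delta^-1 * eps by rewrite ler_pdivlMl // mulr1.
  have : 0 <= SignedRankAgree e1 e2 k by rewrite divr_ge0 ?ler0n.
  lra.
rewrite SignedRankAgree_eq1 // => [|i i_top].
  by rewrite subrr mulr_ge0 ?invr_ge0 ?(ltW delta_gt0) //; exact: norm2_ge0.
have rank_i : (rank e1 i <= k)%N by rewrite inE in i_top.
have norm_i : delta <= `|e1 i|.
  have [/top_norm//|k_ne_d] := eqVneq k d.
  have k_lt_d : (k < d)%N by rewrite ltn_neqAle k_ne_d; case/andP: k_bd.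
  exact: le_trans (ler_peMl (ltW delta_gt0) sqrt2_ge1) (top_norm_ge top_sep i k_lt_d rank_i).
split.
  apply: sgn_perturb; apply: le_lt_trans (normr_le_norm2 (fun l => e1 l - e2 l) i) _.
  exact: lt_le_trans eps_lt_delta norm_i.
apply: rank_perturb (top_sep_all top_sep i rank_i) _ => j neq_ji.
have neq_ij : i != j by rewrite eq_sym.
apply: le_lt_trans (normrD_le_norm2 (fun l => e1 l - e2 l) i j neq_ij) _.
by rewrite ltr_pM2l // (lt_le_trans ltr01 sqrt2_ge1).
Qed.
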